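(* Let $\Gamma=(H,\iota,\sigma,m)$ be a Brauer graph, $H'\subseteq H$ stable under $\iota$, and $(h_1,r_1)$, $(h_2,r_2)$ two distinct maximal sectors of elements of $H'$ in $\Gamma$. For any admissible grading $d:H\to\mathbb{Z}/\overline m\mathbb{Z}$ of $\Gamma$, $$\mu^+_{(h_1,r_1)}\big(\mu^+_{(h_2,r_2)}(\Gamma,d)\big)=\mu^+_{(h_2,r_2)}\big(\mu^+_{(h_1,r_1)}(\Gamma,d)\big).$$
   Context: A Brauer graph $\Gamma=(H,\iota,\sigma,m)$: $H$ finite set, $\iota$ fixed-point-free involution, $\sigma$ a permutation, $m:H\to\mathbb{Z}_{>0}$ constant on $\sigma$-orbits; $\overline m=\mathrm{lcm}\{m(h)\}$. A grading $d:H\to\mathbb{Z}/\overline m\mathbb{Z}$ is admissible if for each $\sigma$-orbit $v$, $\sum_{h\in v}d(h)=\overline m/\widetilde m(v)$, $\widetilde m(v)$ being the value of $m$ on $v$; $(\Gamma,d)$ is then a $\mathbb{Z}/\overline m\mathbb{Z}$-graded Brauer graph. A sector of elements of $H'$ is a pair $(h,r)\in H\times\mathbb{Z}_{\ge0}$ with $r+1$ the least $r'\ge0$ such that $\sigma^{r'}h\notin H'$; it is maximal if moreover $\sigma^{-1}h\notin H'$. The graded generalized Kauer move of a sector is $\mu^+_{(h,r)}(\Gamma,d)=(H,\iota,\sigma_{(h,r)},m_{(h,r)},d_{(h,r)})$ with $\sigma_{(h,r)}=(h\ \ \sigma^{r+1}h)\circ\sigma\circ(\sigma^rh\ \ \iota\sigma^{r+1}h)$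 (permutations applied right to left), $m_{(h,r)}(\sigma^ih)=m(\iota\sigma^{r+1}h)$ for $0\le i\le r$ and $m_{(h,r)}=m$ elsewhere, and $d_{(h,r)}$ given by: $d_{(h,r)}(\iota\sigma^{r+1}h)=-\sum_{i=0}^rd(\sigma^ih)$; $d_{(h,r)}(\sigma^rh)=d(\iota\sigma^{r+1}h)+d(\sigma^rh)$ if $\iota\sigma^{r+1}h\ne\sigma^{-1}h$ and $=\sum_{i=-1}^rd(\sigma^ih)+d(\sigma^rh)$ otherwise; $d_{(h,r)}(\sigma^{-1}h)=\sum_{i=-1}^rd(\sigma^ih)$ if $\iota\sigma^{r+1}h\neq\sigma^{-1}h$ and $=-\sum_{i=0}^rd(\sigma^ih)$ otherwise; $d_{(h,r)}(h')=d(h')$ for all other $h'$. The result is again a graded Brauer graph, and a maximal sector of $\Gamma$ distinct from $(h,r)$ remains a sector of the moved graph, so the iterated moves in the claim are defined. *)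

From mathcomp Require Import all_boot all_order all_algebra all_fingroup.
Set Implicit Arguments. Unset Strict Implicit. Unset Printing Implicit Defensive.
Import GRing.Theory Num.Theory.

Section BrauerDefs.
Variable H : finType.

Definition spow (s : {perm H}) (i : nat) (x : H) : H := iter i s x.

Definition is_brauer_graph (iota sigma : {perm H}) (m : H -> nat) : Prop :=
  [/\ forall x, iota x != x,
      forall x, iota (iota x) = x,
      forall x, (0 < m x)%N &
      forall x, m (sigma x) = m x].

Definition mbar (m : H -> nat) : nat := \big[lcmn/1%N]_(x : H) m x.

(* admissible grading, d : H -> Z, read modulo mbar *)
Definition admissible (sigma : {perm H}) (m : H -> nat) (d : H -> int) : Prop :=
  forall x : H,
    ((\sum_(y in porbit sigma x) d y)%R = (mbar m %/ m x)%N %[mod (mbar m)])%Z.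

Definition sector (sigma : {perm H}) (Hp : {set H}) (h : H) (r : nat) : Prop :=
  (forall i, (i <= r)%N -> spow sigma i h \in Hp) /\ spow sigma r.+1 h \notin Hp.

Definition maximal_sector (sigma : {perm H}) (Hp : {set H}) (h : H) (r : nat)
  : Prop := sector sigma Hp h r /\ (sigma^-1)%g h \notin Hp.

(* graded Brauer graph data (iota is fixed by the moves) *)
Record gbg := GBG { gsigma : {perm H}; gm : H -> nat; gd : H -> int }.

Definition kauer_sigma (iota sigma : {perm H}) (h : H) (r : nat) : {perm H} :=
  (* (p * q) x = q (p x): applies (sigma^r h, iota sigma^{r+1} h) first,
     then sigma, then (h, sigma^{r+1} h) *)
  (tperm (spow sigma r h) (iota (spow sigma r.+1 h)) * sigma
     * tperm h (spow sigma r.+1 h))%g.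

Definition kauer_m (iota sigma : {perm H}) (m : H -> nat) (h : H) (r : nat)
  : H -> nat :=
  fun x => if [exists i : 'I_r.+1, x == spow sigma i h]
           then m (iota (spow sigma r.+1 h)) else m x.

Definition kauer_d (iota sigma : {perm H}) (d : H -> int) (h : H) (r : nat)
  : H -> int :=
  let a := iota (spow sigma r.+1 h) in
  let hm1 := (sigma^-1)%g h in
  let S0 := (\sum_(i < r.+1) d (spow sigma i h))%R in
  let Sm1 := (d hm1 + S0)%R in
  fun x =>
    if x == a then (- S0)%R
    else if x == spow sigma r h then
      (if a != hm1 then (d a + d (spow sigma r h))%R
       else (Sm1 + d (spow sigma r h))%R)
    else if x == hm1 then (if a != hm1 then Sm1 else (- S0)%R)
    else d x.

Definition kauer (iota : {perm H}) (G : gbg) (h : H) (r : nat) : gbg :=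
  GBG (kauer_sigma iota (gsigma G) h r)
      (kauer_m iota (gsigma G) (gm G) h r)
      (kauer_d iota (gsigma G) (gd G) h r).

End BrauerDefs.

From mathcomp Require Import all_boot all_order all_algebra all_fingroup.
From mathcomp Require Import ring.
From Stdlib Require Import FunctionalExtensionality.
Set Implicit Arguments. Unset Strict Implicit. Unset Printing Implicit Defensive.

(* Two distinct maximal sectors are disjoint runs of σ-consecutive half-edges
   of H', whereas every other half-edge a move touches (σ⁻¹h, σ^{r+1}h and its
   ι-partner) lies outside H'.  Hence the move at one sector leaves the other
   sector, its σ-iterates and its degrees untouched, and changes σ⁻¹ of its
   start only when that is ι σ^{r+1} of the first sector.  The two moves then
   act on σ by commuting transpositions, on m on disjoint runs, and on d by
   updates at distinct half-edges, so they commute exactly. *)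

Section Iterates.
Variables (H : finType) (s : {perm H}).

Lemma spowS i x : spow s i.+1 x = s (spow s i x).
Proof. by []. Qed.

Lemma spowD i j x : spow s (i + j) x = spow s i (spow s j x).
Proof. exact: iterD. Qed.

Lemma spow_inj i : injective (spow s i).
Proof. by move=> x y; rewrite /spow -!permX => /perm_inj. Qed.

End Iterates.

Lemma mem_notin_neq (T : eqType) (A : {pred T}) x y :
  x \in A -> y \notin A -> x != y.
Proof. by move=> xA; apply: contra => /eqP <-. Qed.

Lemma tperm_commute (T : finType) (x y u v : T) :
  x != u -> x != v -> y != u -> y != v -> commute (tperm x y) (tperm u v).
Proof.
by move=> *; apply/commgP/conjg_fixP; rewrite tpermJ !tpermD //; rewrite eq_sym.
Qed.

Section Sectors.
Variables (H : finType) (s : {perm H}) (Hp : {set H}).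

Lemma sector_spow_in h r i : sector s Hp h r -> i <= r -> spow s i h \in Hp.
Proof. by move=> [in_r _] /in_r. Qed.

Lemma sector_uniq h r r' : sector s Hp h r -> sector s Hp h r' -> r = r'.
Proof.
move=> [in_r out_r] [in_r' out_r'].
case: (ltngtP r r') => // [/in_r' | /in_r].
- by rewrite (negbTE out_r).
- by rewrite (negbTE out_r').
Qed.

Lemma sector_run_notin h r x :
  sector s Hp h r -> x \notin Hp -> [exists i : 'I_r.+1, x == spow s i h] = false.
Proof.
move=> sec xout; apply/negbTE/existsP => -[i /eqP xE].
by move: xout; rewrite xE (sector_spow_in sec (ltn_ord i)).
Qed.

Lemma maximal_sectors_disjoint h1 h2 r1 r2 i j :
  maximal_sector s Hp h1 r1 -> maximal_sector s Hp h2 r2 -> (h1, r1) != (h2, r2) ->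
  i <= r1 -> j <= r2 -> spow s i h1 != spow s j h2.
Proof.
move=> M1 M2 ne; wlog le_ij : h1 h2 r1 r2 i j M1 M2 ne / i <= j => [sym|].
  case: (leqP i j) => [le_ij | /ltnW le_ji]; first exact: sym.
  by move=> ir jr; rewrite eq_sym (sym h2 h1 r2 r1 j i) // eq_sym.
move=> ir jr; apply/eqP; rewrite -(subnKC le_ij) spowD => /spow_inj.
have : j - i <= j := leq_subr i j.
case: (j - i) => [_ h12|k kj h1E].
  by move: M1 ne; rewrite h12 => M1; rewrite (sector_uniq M1.1 M2.1) eqxx.
case/negP: M1.2; rewrite h1E spowS permK.
exact: sector_spow_in M2.1 (leq_trans (ltnW kj) jr).
Qed.

End Sectors.

Definition regrade (T : eqType) (d : T -> int) (a e p : T) (s : int) : T -> int :=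
  fun x => if x == a then (- s)%R else if x == e then
     (if a != p then d a + d e else (d p + s) + d e)%R
   else if x == p then (if a != p then d p + s else - s)%R else d x.

(* The [if]s record the effect of the other move: after the move at sector l,
   σ⁻¹ of the start of sector k becomes e_l exactly when it was a_l. *)
Lemma regrade_comm (T : eqType) (d : T -> int) (a1 e1 p1 a2 e2 p2 : T) s1 s2 :
  e1 != a1 -> e1 != p1 -> e1 != a2 -> e1 != p2 -> e1 != e2 ->
  e2 != a1 -> e2 != p1 -> e2 != a2 -> e2 != p2 ->
  a1 != a2 -> p1 != p2 ->
  regrade (regrade d a2 e2 p2 s2) a1 e1 (if p1 == a2 then e2 else p1) s1 =1
  regrade (regrade d a1 e1 p1 s1) a2 e2 (if p2 == a1 then e1 else p2) s2.
Proof.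
move=> /eqP? /eqP? /eqP? /eqP? /eqP? /eqP? /eqP? /eqP? /eqP? /eqP? /eqP?.
case: (p1 =P a2) => [?|?]; case: (p2 =P a1) => [?|?]; subst; rewrite /regrade => x.
all: by repeat (case: eqP => //= ?; subst => //); ring.
Qed.

Section KauerEquations.
Variables (H : finType) (iota s : {perm H}) (h : H) (r : nat).

Lemma kauer_sigmaE e b :
  spow s r h = e -> spow s r.+1 h = b ->
  kauer_sigma iota s h r = (tperm e (iota b) * s * tperm h b)%g.
Proof. by move=> <- <-. Qed.

Lemma kauer_dE d e b p S :
  spow s r h = e -> spow s r.+1 h = b -> (s^-1)%g h = p ->
  (\sum_(i < r.+1) d (spow s i h))%R = S ->
  kauer_d iota s d h r = regrade d (iota b) e p S.
Proof. by move=> <- <- <- <-. Qed.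

Lemma eq_kauer_m (s' : {perm H}) m :
  (forall i, i <= r.+1 -> spow s i h = spow s' i h) ->
  kauer_m iota s m h r = kauer_m iota s' m h r.
Proof.
move=> sE; apply: functional_extensionality => x; rewrite /kauer_m sE //.
suff -> : [exists i : 'I_r.+1, x == spow s i h] = [exists i : 'I_r.+1, x == spow s' i h] by [].
by apply: eq_existsb => i; rewrite sE // ltnW.
Qed.

End KauerEquations.

Section KauerAwayFromSector.
Variables (H : finType) (iota sigma : {perm H}) (Hp : {set H}).
Variables (h1 h2 : H) (r1 r2 : nat).
Hypothesis iotaK : involutive iota.
Hypothesis Hp_iota : {in Hp, forall x, iota x \in Hp}.
Hypothesis M1 : maximal_sector sigma Hp h1 r1.
Hypothesis M2 : maximal_sector sigma Hp h2 r2.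
Hypothesis ne12 : (h1, r1) != (h2, r2).

Local Notation e1 := (spow sigma r1 h1).
Local Notation b1 := (spow sigma r1.+1 h1).
Local Notation sigma1 := (kauer_sigma iota sigma h1 r1).

Lemma iota_notin x : x \notin Hp -> iota x \notin Hp.
Proof. by apply: contra => /Hp_iota; rewrite iotaK. Qed.

Lemma kauer_sigma_spow_away i : i <= r2.+1 -> spow sigma1 i h2 = spow sigma i h2.
Proof.
elim: i => [//|i IHi] ir2; rewrite spowS IHi ?(ltnW ir2) // /kauer_sigma !permM.
have y_in : spow sigma i h2 \in Hp := sector_spow_in M2.1 ir2.
have e1y : e1 != spow sigma i h2 := maximal_sectors_disjoint M1 M2 ne12 (leqnn r1) ir2.
have a1y : iota b1 != spow sigma i h2.
  by rewrite eq_sym (mem_notin_neq y_in (iota_notin M1.1.2)).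
have h1y' : h1 != spow sigma i.+1 h2.
  by apply: contraNneq M1.2 => ->; rewrite spowS permK.
have b1y' : b1 != spow sigma i.+1 h2 by rewrite !spowS (inj_eq perm_inj).
by rewrite (tpermD e1y a1y) -spowS (tpermD h1y' b1y').
Qed.

Lemma kauer_sigma_prev_away :
  (sigma1^-1)%g h2 = if (sigma^-1)%g h2 == iota b1 then e1 else (sigma^-1)%g h2.
Proof.
apply: (@perm_inj _ sigma1); rewrite permKV /kauer_sigma !permM.
have -> : tperm e1 (iota b1) (if (sigma^-1)%g h2 == iota b1 then e1 else (sigma^-1)%g h2)
          = (sigma^-1)%g h2.
  case: eqP => [-> | /eqP p2a1]; first exact: tpermL.
  apply: tpermD; last by rewrite eq_sym.
  exact: mem_notin_neq (sector_spow_in M1.1 (leqnn r1)) M2.2.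
have h2_in : h2 \in Hp := sector_spow_in M2.1 (leq0n r2).
rewrite permKV tpermD //; last by rewrite eq_sym (mem_notin_neq h2_in M1.1.2).
exact: maximal_sectors_disjoint M1 M2 ne12 (leq0n r1) (leq0n r2).
Qed.

Lemma kauer_d_away d i : i <= r2 ->
  kauer_d iota sigma d h1 r1 (spow sigma i h2) = d (spow sigma i h2).
Proof.
move=> ir2; have y_in := sector_spow_in M2.1 ir2.
rewrite /kauer_d (negbTE (mem_notin_neq y_in (iota_notin M1.1.2))).
rewrite eq_sym (negbTE (maximal_sectors_disjoint M1 M2 ne12 (leqnn r1) ir2)).
by rewrite (negbTE (mem_notin_neq y_in M1.2)).
Qed.

Lemma kauer_sum_away d :
  (\sum_(i < r2.+1) kauer_d iota sigma d h1 r1 (spow sigma1 i h2) =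
   \sum_(i < r2.+1) d (spow sigma i h2))%R.
Proof.
apply: eq_bigr => i _; have ir2 : i <= r2 by rewrite -ltnS.
by rewrite kauer_sigma_spow_away ?kauer_d_away // (leq_trans ir2).
Qed.

End KauerAwayFromSector.

Section Commutation.
Variables (H : finType) (iota sigma : {perm H}) (Hp : {set H}).
Variables (h1 h2 : H) (r1 r2 : nat).
Hypothesis iotaK : involutive iota.
Hypothesis Hp_iota : {in Hp, forall x, iota x \in Hp}.
Hypothesis M1 : maximal_sector sigma Hp h1 r1.
Hypothesis M2 : maximal_sector sigma Hp h2 r2.
Hypothesis ne12 : (h1, r1) != (h2, r2).

Local Notation e1 := (spow sigma r1 h1).
Local Notation e2 := (spow sigma r2 h2).
Local Notation b1 := (spow sigma r1.+1 h1).
Local Notation b2 := (spow sigma r2.+1 h2).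
Local Notation sigma1 := (kauer_sigma iota sigma h1 r1).
Local Notation sigma2 := (kauer_sigma iota sigma h2 r2).

Let ne21 : (h2, r2) != (h1, r1). Proof. by rewrite eq_sym. Qed.

Let spow12 i (le_i : i <= r2.+1) : spow sigma1 i h2 = spow sigma i h2 :=
  kauer_sigma_spow_away iotaK Hp_iota M1 M2 ne12 le_i.
Let spow21 i (le_i : i <= r1.+1) : spow sigma2 i h1 = spow sigma i h1 :=
  kauer_sigma_spow_away iotaK Hp_iota M2 M1 ne21 le_i.

Let disj i j : i <= r1 -> j <= r2 -> spow sigma i h1 != spow sigma j h2 :=
  maximal_sectors_disjoint M1 M2 ne12.
Let h1_in : h1 \in Hp := sector_spow_in M1.1 (leq0n r1).
Let h2_in : h2 \in Hp := sector_spow_in M2.1 (leq0n r2).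
Let e1_in : e1 \in Hp := sector_spow_in M1.1 (leqnn r1).
Let e2_in : e2 \in Hp := sector_spow_in M2.1 (leqnn r2).
Let b1_out : b1 \notin Hp := M1.1.2.
Let b2_out : b2 \notin Hp := M2.1.2.
Let a1_out : iota b1 \notin Hp := iota_notin iotaK Hp_iota b1_out.
Let a2_out : iota b2 \notin Hp := iota_notin iotaK Hp_iota b2_out.
Let p1_out : (sigma^-1)%g h1 \notin Hp := M1.2.
Let p2_out : (sigma^-1)%g h2 \notin Hp := M2.2.
Let neq_in_out x y : x \in Hp -> y \notin Hp -> x != y := @mem_notin_neq _ Hp x y.
Let h1h2 : h1 != h2 := disj (leq0n r1) (leq0n r2).
Let e1e2 : e1 != e2 := disj (leqnn r1) (leqnn r2).
Let b1b2 : b1 != b2. Proof. by rewrite !spowS (inj_eq perm_inj) disj. Qed.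
Let a1a2 : iota b1 != iota b2. Proof. by rewrite (inj_eq (inv_inj iotaK)). Qed.
Let p1p2 : (sigma^-1)%g h1 != (sigma^-1)%g h2. Proof. by rewrite (inj_eq perm_inj). Qed.

Lemma kauer_sigma_comm : kauer_sigma iota sigma2 h1 r1 = kauer_sigma iota sigma1 h2 r2.
Proof.
rewrite (kauer_sigmaE _ (spow21 (leqnSn r1)) (spow21 (leqnn r1.+1))).
rewrite (kauer_sigmaE _ (spow12 (leqnSn r2)) (spow12 (leqnn r2.+1))) /kauer_sigma.
rewrite !mulgA (@tperm_commute _ e1 (iota b1) e2 (iota b2)).
rewrite -!mulgA (@tperm_commute _ h2 b2 h1 b1) //.
all: by [ | apply: neq_in_out | rewrite eq_sym; apply: neq_in_out | rewrite eq_sym].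
Qed.

Lemma kauer_m_comm m :
  kauer_m iota sigma2 (kauer_m iota sigma m h2 r2) h1 r1 =
  kauer_m iota sigma1 (kauer_m iota sigma m h1 r1) h2 r2.
Proof.
rewrite (eq_kauer_m _ _ (@spow21)) (eq_kauer_m _ _ (@spow12)).
apply: functional_extensionality => x; rewrite /kauer_m.
rewrite (sector_run_notin M2.1 a1_out) (sector_run_notin M1.1 a2_out).
case: existsP => [[i /eqP ->]|_]; case: existsP => [[j]|_] //.
by rewrite (negbTE (disj (ltn_ord i) (ltn_ord j))).
Qed.

Lemma kauer_d_comm d :
  kauer_d iota sigma2 (kauer_d iota sigma d h2 r2) h1 r1 =1
  kauer_d iota sigma1 (kauer_d iota sigma d h1 r1) h2 r2.
Proof.
rewrite (kauer_dE _ (spow21 (leqnSn r1)) (spow21 (leqnn r1.+1))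
  (kauer_sigma_prev_away iota M2 M1 ne21) (kauer_sum_away iotaK Hp_iota M2 M1 ne21 d)).
rewrite (kauer_dE _ (spow12 (leqnSn r2)) (spow12 (leqnn r2.+1))
  (kauer_sigma_prev_away iota M1 M2 ne12) (kauer_sum_away iotaK Hp_iota M1 M2 ne12 d)).
rewrite !(kauer_dE _ erefl erefl erefl erefl).
by apply: regrade_comm => //; apply: neq_in_out.
Qed.

End Commutation.

Theorem proposition2p16 (H : finType) (iota sigma : {perm H}) (m : H -> nat)
  (Hp : {set H}) (h1 h2 : H) (r1 r2 : nat) (d : H -> int) :
  is_brauer_graph iota sigma m ->
  (forall x, x \in Hp -> iota x \in Hp) ->
  maximal_sector sigma Hp h1 r1 ->
  maximal_sector sigma Hp h2 r2 ->
  (h1, r1) != (h2, r2) ->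
  admissible sigma m d ->
  let G12 := kauer iota (kauer iota (GBG sigma m d) h2 r2) h1 r1 in
  let G21 := kauer iota (kauer iota (GBG sigma m d) h1 r1) h2 r2 in
  [/\ gsigma G12 = gsigma G21,
      gm G12 = gm G21 &
      forall x, (gd G12 x = gd G21 x %[mod (mbar m)])%Z].
Proof.
move=> [_ iotaK _ _] Hp_iota M1 M2 ne12 _ G12 G21.
split=> [||x]; rewrite /G12 /G21 /=.
- exact: kauer_sigma_comm iotaK Hp_iota M1 M2 ne12.
- exact: kauer_m_comm iotaK Hp_iota M1 M2 ne12 m.
- by rewrite (kauer_d_comm iotaK Hp_iota M1 M2 ne12 d x).
Qed.
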